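(* Let $q\ge2$, $n\ge1$, $\tau\ge0$, and let $m$ be an integer with $m\in[n-\tau n,n+\tau n]$. Let $\mathbf r\in R_q(m)$ be a constant word and suppose $\kappa^\ast=\frac{\tau n+n-m}{2n}\le\frac{q-1}{q}$. Then $$|\mathcal{B}(\mathbf r,\tau n)\cap\Sigma_q^n|=q^{n\left(H_q(\kappa^\ast)+O\left(\frac{\log_q n}{n}\right)\right)}.$$
   Context: $\Sigma_q$ is a finite alphabet of size $q$. $R_q(m)=\{(\alpha,\alpha,\dots,\alpha)\in\Sigma_q^m:\alpha\in\Sigma_q\}$. The insdel distance $d(\mathbf a,\mathbf b)$ between words (lengths may differ) is the minimum number of single-symbol insertions and deletions needed to transform $\mathbf a$ into $\mathbf b$. For $\mathbf u\in\Sigma_q^m$ and real $z\ge0$, $\mathcal{B}(\mathbf u,z)=\{\mathbf v\in\bigcup_{i=\max\{m-z,0\}}^{m+z}\Sigma_q^i: d(\mathbf u,\mathbf v)\le z\}$. $H_q(x)=x\log_q(q-1)-x\log_qx-(1-x)\log_q(1-x)$ for $0<x<1$, $H_q(0)=H_q(1)=0$. *)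

From Stdlib Require Import Reals ClassicalEpsilon.
From mathcomp Require Import all_boot.

Set Implicit Arguments.
Unset Strict Implicit.
Unset Printing Implicit Defensive.

Definition pb (P : Prop) : bool :=
  if excluded_middle_informative P then true else false.

Definition ins_at {T : Type} (i : nat) (x : T) (s : seq T) : seq T :=
  take i s ++ x :: drop i s.

Definition insdel_step {T : Type} (a b : seq T) : Prop :=
  (exists i x, b = ins_at i x a) \/ (exists i x, a = ins_at i x b).

Fixpoint insdel_reach {T : Type} (k : nat) (a b : seq T) : Prop :=
  match k with
  | 0 => a = b
  | k'.+1 => exists c, insdel_step a c /\ insdel_reach k' c b
  end.

(* The minimum is taken over
   k <= size a + size b; the value size a + size b (delete everything,
   insert everything) is always achievable, so it is the correct default. *)
Definition insdel_dist {T : Type} (a b : seq T) : nat :=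
  \big[minn/(size a + size b)]_(k < (size a + size b).+1
                                 | pb (insdel_reach k a b)) k.

Definition const_word (q : nat) (alpha : 'I_q) (m : nat) : seq 'I_q :=
  nseq m alpha.

Definition ball_count_n (q : nat) (u : seq 'I_q) (z : R) (n : nat) : nat :=
  #|[set v : n.-tuple 'I_q | pb (Rle (INR (insdel_dist u (val v))) z)]|.

Open Scope R_scope.

Definition logq (q : nat) (x : R) : R := ln x / ln (INR q).

(* q-ary entropy; H_q(0) = H_q(1) = 0 (and 0 outside (0,1), never used) *)
Definition Hq (q : nat) (x : R) : R :=
  if pb (0 < x < 1) then
    x * logq q (INR q - 1) - x * logq q x - (1 - x) * logq q (1 - x)
  else 0.

(* The insdel distance from x^m to a word s is m + |s| - 2 min(m, #_x s): a longest
   common subsequence of s and a constant word is a run of x's.  So for |v| = n we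
   have d(x^m, v) <= tau n iff v has at most K = floor(kappa n) letters other than x,
   and the ball holds sum_(j <= K) C(n, j) (q-1)^j words of length n.  Since
   K <= n (q-1)/q these terms increase with j, so the sum is within a factor K + 1 of
   its last term.  In turn C(n, K) K^K (n-K)^(n-K) is the largest of the n + 1 terms
   of (K + (n-K))^n = n^n, which pins ln C(n, K) to n ln n - K ln K - (n-K) ln (n-K)
   up to ln (n+1).  Replacing K by kappa n moves each x ln x by O(ln n), and at
   kappa n the main term plus kappa n ln (q-1) is exactly n H_q(kappa) ln q. *)

From Stdlib Require Import Reals Lra Lia ClassicalEpsilon.
From mathcomp Require Import all_boot zify.

Set Implicit Arguments.
Unset Strict Implicit.
Unset Printing Implicit Defensive.

Local Open Scope nat_scope.

Lemma pbP (P : Prop) : reflect P (pb P).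
Proof. by rewrite /pb; case: excluded_middle_informative => H; constructor. Qed.

Lemma bigmin_le (I : eqType) (r : seq I) (P : pred I) (F : I -> nat) x j :
  j \in r -> P j -> \big[minn/x]_(i <- r | P i) F i <= F j.
Proof.
elim: r => [|y r IH] //=; rewrite inE big_cons => /orP [/eqP <- -> | jr Pj].
  exact: geq_minl.
by case: (P y); [apply: leq_trans (geq_minr _ _) _|]; apply: IH.
Qed.

(** * Insertion-deletion distance to a constant word *)

Section InsdelConstWord.
Variable T : eqType.
Implicit Types (a b c s : seq T) (x : T).

Lemma insdel_reach_trans k l a b c :
  insdel_reach k a b -> insdel_reach l b c -> insdel_reach (k + l) a c.
Proof.
elim: k a => [|k IH] a /=; first by move=> ->.
by move=> [d [ad dc]] bc; exists d; split; last exact: IH bc.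
Qed.

Lemma insdel_reach1 a b : insdel_step a b -> insdel_reach 1 a b.
Proof. by exists b. Qed.

Lemma insdel_reach_sym k a b : insdel_reach k a b -> insdel_reach k b a.
Proof.
elim: k a => [|k IH] a; first by move=> /= ->.
move=> [c [ac cb]]; rewrite -addn1; apply: insdel_reach_trans (IH _ cb) _.
by apply: insdel_reach1; case: ac; [right | left].
Qed.

Lemma insdel_reach_cons k x a b :
  insdel_reach k a b -> insdel_reach k (x :: a) (x :: b).
Proof.
elim: k a => [|k IH] a /=; first by move=> ->.
move=> [c [ac cb]]; exists (x :: c); split; last exact: IH.
by case: ac => [[i [y ->]] | [i [y ->]]]; [left | right]; exists i.+1, y.
Qed.

Lemma insdel_step_cons x s : insdel_step s (x :: s).
Proof. by left; exists 0, x; rewrite /ins_at take0 drop0. Qed.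

Lemma size_ins_at i x s : size (ins_at i x s) = (size s).+1.
Proof. by rewrite /ins_at size_cat /= -{3}(cat_take_drop i s) size_cat addnS. Qed.

Lemma count_ins_at (p : pred T) i x s :
  count p (ins_at i x s) = p x + count p s.
Proof. by rewrite /ins_at count_cat /= -{3}(cat_take_drop i s) count_cat; lia. Qed.

Lemma insdel_reach_nseq x j s :
  j <= count_mem x s -> insdel_reach (size s - j) (nseq j x) s.
Proof.
elim: s j => [|y s IH] j; first by rewrite leqn0 => /eqP ->.
case: j => [_ | j].
  have := insdel_reach_trans (IH 0 (leq0n _)) (insdel_reach1 (insdel_step_cons y s)).
  by rewrite !subn0 addn1.
rewrite (_ : size (y :: s) = (size s).+1) //.
rewrite (_ : count_mem x (y :: s) = (y == x) + count_mem x s) //.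
have [-> | neq] := eqVneq y x; rewrite ?eqxx ?add1n ?ltnS => le_j.
  by rewrite subSS; exact: insdel_reach_cons (IH _ le_j).
rewrite add0n in le_j.
have -> : (size s).+1 - j.+1 = size s - j.+1 + 1.
  by have := count_size (pred1 x) s; lia.
by apply: insdel_reach_trans (IH _ le_j) _; apply/insdel_reach1/insdel_step_cons.
Qed.

Lemma insdel_reach_lipschitz (f : seq T -> nat) k a b :
  (forall i x s, f (ins_at i x s) <= f s + 1 /\ f s <= f (ins_at i x s) + 1) ->
  insdel_reach k a b -> f b <= f a + k.
Proof.
move=> f_ins; elim: k a => [|k IH] a /=; first by move=> ->; rewrite addn0.
move=> [c [ac /IH fbc]]; suff : f c <= f a + 1 by lia.
by case: ac => [[i [y ->]] | [i [y ->]]]; case: (f_ins i y a) => //; case: (f_ins i y c).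
Qed.

Lemma insdel_dist_le k a b : insdel_reach k a b -> insdel_dist a b <= k.
Proof.
rewrite /insdel_dist; have [lek reach | ltk _] := leqP k (size a + size b).
  have [i -> Pi] : exists2 i : 'I_(size a + size b).+1, k = i & pb (insdel_reach i a b).
    by exists (Ordinal (leq_ltn_trans lek (ltnSn _))) => //; apply/pbP.
  exact: bigmin_le (mem_index_enum i) Pi.
have : insdel_dist a b <= size a + size b.
  apply: (big_ind (fun y => y <= size a + size b)) => // [y z | i _].
    by rewrite geq_min => ->.
  by rewrite -ltnS.
by move=> /leq_trans; apply; apply: ltnW.
Qed.

Lemma insdel_dist_ge g a b :
  g <= size a + size b -> (forall k, insdel_reach k a b -> g <= k) ->
  g <= insdel_dist a b.
Proof.
move=> g_le g_reach; apply: (big_ind (fun y => g <= y)) => //.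
- by move=> y z; rewrite leq_min => -> ->.
- by move=> i /pbP /g_reach.
Qed.

Lemma insdel_dist_nseq x m s :
  insdel_dist (nseq m x) s = m + size s - (minn m (count_mem x s)).*2.
Proof.
set j := minn m (count_mem x s); apply/eqP; rewrite eqn_leq; apply/andP; split.
  have j_le_m : j <= count_mem x (nseq m x) by rewrite count_nseq /= eqxx mul1n geq_minl.
  have := insdel_reach_trans (insdel_reach_sym (insdel_reach_nseq j_le_m))
    (insdel_reach_nseq (geq_minr m (count_mem x s))).
  rewrite size_nseq => /insdel_dist_le /leq_trans; apply.
  by rewrite /j; have := count_size (pred1 x) s; lia.
apply: insdel_dist_ge => [|k]; first by rewrite size_nseq; lia.
pose f t := m + size t - (minn m (count_mem x t)).*2.
have f_ins i y t : f (ins_at i y t) <= f t + 1 /\ f t <= f (ins_at i y t) + 1.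
  rewrite /f size_ins_at count_ins_at; have := count_size (pred1 x) t.
  by case: (y == x) => /=; lia.
move=> /(insdel_reach_lipschitz f_ins); rewrite /f size_nseq count_nseq /= eqxx mul1n.
by rewrite minnn addnn subnn add0n.
Qed.
End InsdelConstWord.

(** * Counting words and binomial terms *)

Definition binom_term (n a b i : nat) : nat := 'C(n, i) * (a ^ (n - i) * b ^ i).

Lemma binom_termS0 n a b : binom_term n.+1 a b 0 = a * binom_term n a b 0.
Proof. by rewrite /binom_term !bin0 !subn0 expnS; lia. Qed.

Lemma binom_termSS n a b i :
  binom_term n.+1 a b i.+1 = b * binom_term n a b i + a * binom_term n a b i.+1.
Proof.
rewrite /binom_term binS subSS expnS mulnDl.
have [lt_in | le_ni] := ltnP i n.
  by rewrite -(subnSK lt_in) expnS; lia.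
by rewrite bin_small ?ltnS //; lia.
Qed.

Lemma big_tuple_cons (T : finType) n (F : n.+1.-tuple T -> nat) :
  \sum_(t : n.+1.-tuple T) F t = \sum_(x : T) \sum_(t : n.-tuple T) F [tuple of x :: t].
Proof.
rewrite pair_big /= (reindex (fun p : T * n.-tuple T => [tuple of p.1 :: p.2])) /=.
  by apply: eq_bigr => -[x t].
exists (fun t => (thead t, [tuple of behead t])) => [[x t] _ | t _] /=.
  by congr pair; apply: val_inj.
by rewrite [RHS]tuple_eta.
Qed.

Section CountTuples.
Variables (T : finType) (P : pred T).

Lemma card_tuple_count_eq n (j : nat) :
  #|[set t : n.-tuple T | count P t == j]| = binom_term n #|predC P| #|P| j.
Proof.
rewrite -sum1_card big_mkcond /=.
under eq_bigr => t _ do rewrite inE (_ : (if _ then 1 else 0) = (count P t == j)) //.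
elim: n j => [|n IH] j.
  rewrite (eq_bigr (fun _ => (0 == j : nat))) => [|t _]; last by rewrite tuple0.
  by rewrite sum_nat_const card_tuple expn0 mul1n /binom_term; case: j.
rewrite big_tuple_cons (bigID P) /=.
rewrite (eq_bigr (fun _ => \sum_(t : n.-tuple T) ((count P t).+1 == j))) => [|x ->] //.
rewrite [X in _ + X](eq_bigr (fun _ => \sum_(t : n.-tuple T) (count P t == j))) => [|x /negbTE ->] //.
rewrite !sum_nat_cond_const IH !cardsE; case: j => [|j].
  by rewrite big1 // muln0 add0n binom_termS0.
by under eq_bigr do rewrite eqSS; rewrite IH binom_termSS.
Qed.

Lemma card_tuple_count_le n K :
  #|[set t : n.-tuple T | count P t <= K]| =
  \sum_(j < K.+1) binom_term n #|predC P| #|P| j.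
Proof.
under eq_bigr => j _ do rewrite -card_tuple_count_eq -sum1_card big_mkcond /=.
rewrite exchange_big -sum1_card big_mkcond /=; apply: eq_bigr => t _; rewrite inE.
under eq_bigr => j _ do rewrite inE eq_sym.
by rewrite -big_mkcond (big_ord1_eq _ (fun=> 1)) ltnS.
Qed.
End CountTuples.

(* Consecutive terms are compared through a common factor, so [a] may vanish. *)
Lemma binom_term_succE n a b i : i < n ->
  let X := 'C(n, i) * a ^ (n - i.+1) * b ^ i in
  binom_term n a b i = a * X /\ i.+1 * binom_term n a b i.+1 = (n - i) * b * X.
Proof.
move=> lt_in X; rewrite /binom_term /X; split.
  by rewrite -(subnSK lt_in) expnS; nia.
by rewrite mulnA mul_bin_left expnS; nia.
Qed.

Lemma binom_term_le_succ n a b i :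
  i < n -> i.+1 * a <= (n - i) * b -> binom_term n a b i <= binom_term n a b i.+1.
Proof.
move=> lt_in ratio; have [t_i t_Si] := binom_term_succE a b lt_in.
by rewrite -(leq_pmul2l (ltn0Sn i)) t_Si t_i [leqLHS]mulnA leq_mul2r ratio orbT.
Qed.

Lemma binom_term_succ_le n a b i :
  i < n -> (n - i) * b <= i.+1 * a -> binom_term n a b i.+1 <= binom_term n a b i.
Proof.
move=> lt_in ratio; have [t_i t_Si] := binom_term_succE a b lt_in.
by rewrite -(leq_pmul2l (ltn0Sn i)) t_Si t_i [leqRHS]mulnA leq_mul2r ratio orbT.
Qed.

Lemma binom_term_le_up n a b k i :
  i <= k <= n -> k * a <= (n - k).+1 * b -> binom_term n a b i <= binom_term n a b k.
Proof.
move=> /andP [le_ik le_kn] ratio.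
apply: (@homo_leq_in _ [pred j | j <= k] (binom_term n a b) (fun u v => u <= v)) => //.
- exact: leq_trans.
- by move=> x y _; rewrite inE => le_yk z /andP [_ /ltnW /leq_trans]; apply.
- move=> j _; rewrite inE => lt_jk; apply: binom_term_le_succ; first exact: leq_trans lt_jk le_kn.
  apply: leq_trans (leq_mul lt_jk (leqnn a)) (leq_trans ratio (leq_mul _ (leqnn b))).
  lia.
- by rewrite inE.
Qed.

Lemma binom_term_le_down n a b k i :
  k <= i <= n -> (n - k) * b <= k.+1 * a -> binom_term n a b i <= binom_term n a b k.
Proof.
move=> /andP [le_ki le_in] ratio.
apply: (@homo_leq_in _ [pred j | k <= j <= n] (binom_term n a b) (fun u v => v <= u)).
- by [].
- by move=> x y z le_zx le_yz; apply: leq_trans le_yz le_zx.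
- move=> x y; rewrite !inE => /andP [le_kx _] /andP [_ le_yn] z /andP [lt_xz lt_zy].
  by rewrite inE; lia.
- move=> j; rewrite !inE => /andP [le_kj _] /andP [_ lt_jn]; apply: binom_term_succ_le => //.
  apply: leq_trans (leq_mul _ (leqnn b)) (leq_trans ratio (leq_mul _ (leqnn a))); lia.
- by rewrite inE leqnn (leq_trans le_ki le_in).
- by rewrite inE le_ki le_in.
- exact: le_ki.
Qed.

Lemma binom_term_mode_max n k i :
  k <= n -> i <= n -> binom_term n (n - k) k i <= binom_term n (n - k) k k.
Proof.
move=> le_kn le_in; have [le_ik | lt_ki] := leqP i k.
  by apply: binom_term_le_up; [rewrite le_ik | rewrite mulnC leq_mul2r leqnSn orbT].
by apply: binom_term_le_down; [rewrite (ltnW lt_ki) | rewrite mulnC; apply: leq_mul].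
Qed.

Lemma binom_term_mode_bounds n k : k <= n ->
  binom_term n (n - k) k k <= n ^ n <= n.+1 * binom_term n (n - k) k k.
Proof.
move=> le_kn.
have -> : n ^ n = \sum_(i < n.+1) binom_term n (n - k) k i by rewrite -expnDn subnK.
apply/andP; split.
  by rewrite (bigD1 (Ordinal (leq_ltn_trans le_kn (ltnSn n)))) //= leq_addr.
rewrite -[X in _ <= X * _](card_ord n.+1) -sum_nat_const; apply: leq_sum => i _.
by apply: binom_term_mode_max => //; rewrite -ltnS.
Qed.

Lemma sum_binom_term_le n a b K : K <= n -> K * a <= (n - K).+1 * b ->
  \sum_(i < K.+1) binom_term n a b i <= K.+1 * binom_term n a b K.
Proof.
move=> le_Kn ratio; rewrite -[X in _ <= X * _](card_ord K.+1) -sum_nat_const.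
by apply: leq_sum => i _; apply: binom_term_le_up; rewrite // -ltnS ltn_ord.
Qed.

(** * Logarithmic estimates *)

Local Open Scope R_scope.

Lemma ln_le x y : 0 < x -> x <= y -> ln x <= ln y.
Proof.
move=> x_gt0 /Rle_lt_or_eq_dec [lt_xy | <-]; last exact: Rle_refl.
exact/Rlt_le/ln_increasing.
Qed.

Lemma ln_ge0 x : 1 <= x -> 0 <= ln x.
Proof. by move=> x_ge1; rewrite -ln_1; apply: ln_le => //; lra. Qed.

Lemma ln_le_sub1 x : 0 < x -> ln x <= x - 1.
Proof. by move=> x_gt0; have := exp_ineq1_le (ln x); rewrite exp_ln //; lra. Qed.

Lemma Rabs_le_inv x c : Rabs x <= c -> - c <= x <= c.
Proof. by have := Rle_abs x; have := Rle_abs (- x); rewrite Rabs_Ropp; lra. Qed.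

Lemma INR_subn a b : (b <= a)%N -> INR (a - b) = INR a - INR b.
Proof. by move=> /leP; apply: minus_INR. Qed.

Lemma INR_gt0 a : (0 < a)%N -> 0 < INR a.
Proof. by move=> /ltP; apply: lt_0_INR. Qed.

Lemma ln_INR_le a b : (0 < a)%N -> (a <= b)%N -> ln (INR a) <= ln (INR b).
Proof. by move=> a_gt0 /leP le_ab; apply: ln_le; [apply: INR_gt0 | apply: le_INR]. Qed.

Lemma ln_INR_mul a b :
  (0 < a)%N -> (0 < b)%N -> ln (INR (a * b)) = ln (INR a) + ln (INR b).
Proof. by move=> a_gt0 b_gt0; rewrite mult_INR ln_mult //; apply: INR_gt0. Qed.

Lemma INR_expn a k : INR (a ^ k) = INR a ^ k.
Proof. by elim: k => [|k IH] //; rewrite expnS mult_INR IH. Qed.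

Lemma ln_INR_expn a k : (0 < a)%N -> ln (INR (a ^ k)) = INR k * ln (INR a).
Proof. by move=> a_gt0; rewrite INR_expn ln_pow //; apply: INR_gt0. Qed.

Lemma ln_INR_expn_self k : ln (INR (k ^ k)) = INR k * ln (INR k).
Proof. by case: k => [|k]; [rewrite /= ln_1 Rmult_0_l | apply: ln_INR_expn]. Qed.

Lemma nat_floor_exists y : 0 <= y -> exists k : nat, INR k <= y < INR k + 1.
Proof.
move=> y_ge0; have [le_fy lt_yf] := base_Int_part y.
have /lt_IZR f_gt_m1 : -1 < IZR (Int_part y) by lra.
exists (Z.to_nat (Int_part y)); rewrite INR_IZR_INZ Znat.Z2Nat.id; [lra | lia].
Qed.

Lemma INR_le_floor k K y : INR K <= y < INR K + 1 -> (INR k <= y <-> (k <= K)%N).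
Proof.
move=> [le_Ky lt_yK]; split => [le_ky | /leP /le_INR le_kK]; last lra.
by rewrite -ltnS; apply/ltP/INR_lt; rewrite S_INR; lra.
Qed.

Lemma xlnx_ge x : 0 < x -> x - 1 <= x * ln x.
Proof.
move=> x_gt0; have := ln_le_sub1 (Rinv_0_lt_compat _ x_gt0).
rewrite ln_Rinv // => le_ln.
have := Rmult_le_compat_l x _ _ (Rlt_le _ _ x_gt0) le_ln.
by rewrite Rmult_minus_distr_l Rinv_r ?Rmult_1_r; lra.
Qed.

Lemma xlnx_le0 x : 0 <= x <= 1 -> x * ln x <= 0.
Proof.
move=> [/Rle_lt_or_eq_dec [x_gt0 | <-] x_le1]; last by rewrite Rmult_0_l; apply: Rle_refl.
have : ln x <= 0 by rewrite -ln_1; apply: ln_le.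
by move=> ln_le0; have := Rmult_le_compat_l x _ _ (Rlt_le _ _ x_gt0) ln_le0; lra.
Qed.

Lemma xlnx_le_xlnx a b : 1 <= a <= b -> a * ln a <= b * ln b.
Proof.
move=> [a_ge1 le_ab]; have ln_ab : ln a <= ln b by apply: ln_le; lra.
have lnb_ge0 : 0 <= ln b by apply: ln_ge0; lra.
apply: Rle_trans (_ : a * ln b <= _).
  by apply: Rmult_le_compat_l; lra.
by apply: Rmult_le_compat_r.
Qed.

Lemma xlnx_incr_le a b N : 0 < a <= b -> b < a + 1 -> 1 <= b <= N ->
  b * ln b - a * ln a <= ln N + 1.
Proof.
move=> [a_gt0 le_ab] lt_ba [b_ge1 le_bN].
have split_diff : b * ln b - a * ln a = (b - a) * ln b + a * ln (b / a).
  by rewrite /Rdiv ln_mult ?ln_Rinv; try apply: Rinv_0_lt_compat; lra.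
have lnb_ge0 : 0 <= ln b by apply: ln_ge0.
have lnb_le : ln b <= ln N by apply: ln_le; lra.
have ratio : a * ln (b / a) <= b - a.
  have := ln_le_sub1 (Rdiv_lt_0_compat _ _ (ltac:(lra) : 0 < b) a_gt0).
  move=> /(Rmult_le_compat_l a _ _ (Rlt_le _ _ a_gt0)).
  by have -> : a * (b / a - 1) = b - a by field; lra.
have : (b - a) * ln b <= 1 * ln b by apply: Rmult_le_compat_r; lra.
lra.
Qed.

Lemma xlnx_near a b N : 0 <= a <= b -> b < a + 1 -> 1 <= N -> b <= N ->
  Rabs (b * ln b - a * ln a) <= ln N + 1.
Proof.
move=> [a_ge0 le_ab] lt_ba N_ge1 le_bN; have lnN_ge0 := ln_ge0 N_ge1.
have xlnx_ge_m1 x : 0 <= x -> -1 <= x * ln x.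
  case/Rle_lt_or_eq_dec => [x_gt0 | <-]; [have := xlnx_ge x_gt0 | rewrite Rmult_0_l]; lra.
apply: Rabs_le; split.
  have [a_lt1 | a_ge1] := Rlt_le_dec a 1.
    by have := @xlnx_le0 a; have := xlnx_ge_m1 b; lra.
  by have := @xlnx_le_xlnx a b; lra.
have [b_lt1 | b_ge1] := Rlt_le_dec b 1.
  by have := @xlnx_le0 b; have := xlnx_ge_m1 a a_ge0; lra.
by apply: xlnx_incr_le; lra.
Qed.

(* n times the binary entropy of k/n, in nats. *)
Definition ln_binom_approx (n k : R) : R := n * ln n - k * ln k - (n - k) * ln (n - k).

Lemma ln_binomial_bounds n k : (k <= n)%N ->
  ln_binom_approx (INR n) (INR k) - ln (INR n.+1) <= ln (INR 'C(n, k))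
  <= ln_binom_approx (INR n) (INR k).
Proof.
move=> le_kn; have /andP [T_le T_ge] := binom_term_mode_bounds le_kn.
have pow_self_gt0 j : (0 < j ^ j)%N by rewrite expn_gt0; case: j.
have C_gt0 : (0 < 'C(n, k))%N by rewrite bin_gt0.
have T_gt0 : (0 < binom_term n (n - k) k k)%N by rewrite !muln_gt0 C_gt0 !pow_self_gt0.
have lnT : ln (INR (binom_term n (n - k) k k)) =
    ln (INR 'C(n, k)) + INR (n - k) * ln (INR (n - k)) + INR k * ln (INR k).
  rewrite /binom_term !ln_INR_mul ?muln_gt0 ?pow_self_gt0 //.
  by rewrite !ln_INR_expn_self Rplus_assoc.
have := ln_INR_le T_gt0 T_le; have := ln_INR_le (pow_self_gt0 n) T_ge.
rewrite ln_INR_mul // ln_INR_expn_self lnT INR_subn // /ln_binom_approx; lra.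
Qed.

Lemma ln_sum_binom_term n r K : (0 < r)%N -> (K <= n)%N -> (K * r.+1 <= n * r)%N ->
  Rabs (ln (INR (\sum_(j < K.+1) binom_term n 1 r j))
        - (ln (INR 'C(n, K)) + INR K * ln (INR r))) <= ln (INR n.+1).
Proof.
move=> r_gt0 le_Kn ratio.
have T_gt0 : (0 < binom_term n 1 r K)%N by rewrite !muln_gt0 bin_gt0 le_Kn !expn_gt0 r_gt0.
have lnT : ln (INR (binom_term n 1 r K)) = ln (INR 'C(n, K)) + INR K * ln (INR r).
  by rewrite /binom_term exp1n mul1n ln_INR_mul ?bin_gt0 ?expn_gt0 ?r_gt0 // ln_INR_expn.
have S_ge : (binom_term n 1 r K <= \sum_(j < K.+1) binom_term n 1 r j)%N.
  by rewrite big_ord_recr leq_addl.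
have S_le : (\sum_(j < K.+1) binom_term n 1 r j <= n.+1 * binom_term n 1 r K)%N.
  apply: leq_trans (sum_binom_term_le le_Kn _) _; first nia.
  by rewrite leq_mul2r ltnS le_Kn orbT.
have := ln_INR_le T_gt0 S_ge; have := ln_INR_le (leq_trans T_gt0 S_ge) S_le.
have : 1 <= INR n.+1 by rewrite S_INR; have := pos_INR n; lra.
by move=> /ln_ge0; rewrite ln_INR_mul // lnT => ? ? ?; apply: Rabs_le; lra.
Qed.

Lemma ln_binom_approx_near n k y : 1 <= n -> 0 <= k <= y -> y < k + 1 -> y <= n ->
  Rabs (ln_binom_approx n y - ln_binom_approx n k) <= 2 * (ln n + 1).
Proof.
move=> n_ge1 [k_ge0 le_ky] lt_yk le_yn.
have near_k := xlnx_near (conj k_ge0 le_ky) lt_yk n_ge1 le_yn.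
have near_nk : Rabs ((n - k) * ln (n - k) - (n - y) * ln (n - y)) <= ln n + 1.
  by apply: xlnx_near; lra.
have -> : ln_binom_approx n y - ln_binom_approx n k =
    - (y * ln y - k * ln k) + ((n - k) * ln (n - k) - (n - y) * ln (n - y)).
  by rewrite /ln_binom_approx; ring.
by apply: Rle_trans (Rabs_triang _ _) _; rewrite Rabs_Ropp; lra.
Qed.

Lemma Hq_ln_binom_approx q n kap : (2 <= q)%N -> 0 < n -> 0 <= kap < 1 ->
  n * Hq q kap * ln (INR q) = ln_binom_approx n (kap * n) + kap * n * ln (INR q - 1).
Proof.
move=> q_ge2 n_gt0 [kap_ge0 kap_lt1].
have q_ge2R : 2 <= INR q by apply: (le_INR 2); apply/leP.
have lnq_neq0 : ln (INR q) <> 0 by apply: ln_neq_0; lra.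
rewrite /Hq /ln_binom_approx; case: (Rle_lt_or_eq_dec _ _ kap_ge0) => [kap_gt0 | <-].
  rewrite (introT (pbP _) (conj kap_gt0 kap_lt1)) /logq.
  have -> : n - kap * n = (1 - kap) * n by ring.
  by rewrite !ln_mult; try lra; field.
rewrite (introF (pbP _)); last lra.
by rewrite !Rmult_0_l !Rminus_0_r; ring.
Qed.

(** * The ball around a constant word *)

Lemma insdel_dist_nseq_le (T : eqType) (x : T) m (s : seq T) z :
  INR (size s) - z <= INR m ->
  (INR (insdel_dist (nseq m x) s) <= z <->
   INR (count (predC1 x) s) <= (z + INR (size s) - INR m) / 2).
Proof.
move=> size_le.
have count_split : (count_mem x s + count (predC1 x) s = size s)%N.
  by rewrite -(count_predC (pred1 x)); congr addn; apply: eq_count.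
have sizeR := f_equal INR count_split; rewrite plus_INR in sizeR.
have [le_m | lt_m] := leqP m (count_mem x s).
  rewrite insdel_dist_nseq (minn_idPl le_m).
  have -> : (m + size s - m.*2 = size s - m)%N by lia.
  have /leP /le_INR le_mR := le_m.
  by rewrite INR_subn; [split; lra | lia].
rewrite insdel_dist_nseq (minn_idPr (ltnW lt_m)).
have -> : (m + size s - (count_mem x s).*2
           = m + count (predC1 x) s + count (predC1 x) s - size s)%N by lia.
have /ltP /lt_INR lt_mR := lt_m.
by rewrite INR_subn ?plus_INR; [split; lra | lia].
Qed.

Lemma ball_count_const_word q (x : 'I_q) m n z K :
  INR n - z <= INR m -> INR K <= (z + INR n - INR m) / 2 < INR K + 1 ->
  ball_count_n (const_word x m) z n = (\sum_(j < K.+1) binom_term n 1 q.-1 j)%N.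
Proof.
move=> n_le floor_K.
have -> : ball_count_n (const_word x m) z n =
    #|[set v : n.-tuple 'I_q | (count (predC1 x) v <= K)%N]|.
  rewrite /ball_count_n; apply: eq_card => v; rewrite !inE.
  have dist_le : INR (insdel_dist (const_word x m) v) <= z <-> (count (predC1 x) v <= K)%N.
    by rewrite -(INR_le_floor _ floor_K) insdel_dist_nseq_le size_tuple.
  by apply/pbP/idP => /dist_le.
rewrite card_tuple_count_le cardC1 card_ord.
have -> : #|predC (predC1 x)| = 1%N.
  by rewrite -(card1 x); apply: eq_card => y; rewrite !inE negbK.
by [].
Qed.

Lemma ln_partial_binom_sum n r K y : (0 < r)%N -> 1 <= INR n ->
  INR K <= y < INR K + 1 -> y * INR r.+1 <= INR n * INR r ->
  Rabs (ln (INR (\sum_(j < K.+1) binom_term n 1 r j))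
        - (ln_binom_approx (INR n) y + y * ln (INR r)))
    <= 4 * ln (INR n) + 4 + ln (INR r.+1).
Proof.
move=> r_gt0 n_ge1 [K_le_y y_lt_K] y_ratio.
have r_ge1 : 1 <= INR r by apply: (le_INR 1); apply/leP.
have K_ge0 := pos_INR K.
have K_ratio : (K * r.+1 <= n * r)%N.
  apply/leP/INR_le; rewrite !mult_INR.
  by apply: Rle_trans y_ratio; apply: Rmult_le_compat_r; [apply: pos_INR | lra].
have K_le_n : (K <= n)%N by nia.
have y_le_n : y <= INR n by move: y_ratio; rewrite S_INR; nra.
have sum_est := Rabs_le_inv (ln_sum_binom_term r_gt0 K_le_n K_ratio).
have [binom_ge binom_le] := ln_binomial_bounds K_le_n.
have approx_est := Rabs_le_inv
  (ln_binom_approx_near n_ge1 (conj K_ge0 K_le_y) y_lt_K y_le_n).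
have lnr_ge0 : 0 <= ln (INR r) by apply: ln_ge0.
have lnr_le : ln (INR r) <= ln (INR r.+1) by apply: ln_le; rewrite ?S_INR; lra.
have frac_ge0 : 0 <= (y - INR K) * ln (INR r) by apply: Rmult_le_pos; lra.
have frac_le : (y - INR K) * ln (INR r) <= 1 * ln (INR r) by apply: Rmult_le_compat_r; lra.
have ln_n1 : ln (INR n.+1) <= ln (INR n) + 1.
  have ln2_le1 : ln 2 <= 1 by have := ln_le_sub1 (ltac:(lra) : 0 < 2); lra.
  have : ln (INR n.+1) <= ln (2 * INR n) by apply: ln_le; rewrite ?S_INR; lra.
  by rewrite ln_mult; lra.
by apply: Rabs_le; lra.
Qed.

Lemma ln_ball_count_const_word q n m (x : 'I_q) tau :
  (2 <= q)%N -> (1 <= n)%N -> INR n - tau * INR n <= INR m <= INR n + tau * INR n ->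
  let kappa := (tau * INR n + INR n - INR m) / (2 * INR n) in
  kappa <= (INR q - 1) / INR q ->
  Rabs (ln (INR (ball_count_n (const_word x m) (tau * INR n) n))
        - INR n * Hq q kappa * ln (INR q)) <= 4 * ln (INR n) + 4 + ln (INR q).
Proof.
move=> q_ge2 n_ge1 [m_ge m_le] kappa kappa_le.
have n_ge1R : 1 <= INR n by apply: (le_INR 1); apply/leP.
have q_ge2R : 2 <= INR q by apply: (le_INR 2); apply/leP.
set r := q.-1; have q_eq : r.+1 = q by rewrite /r prednK // ltnW.
have rR : INR r = INR q - 1 by rewrite -q_eq S_INR; ring.
have r_gt0 : (0 < r)%N by rewrite -ltnS q_eq.
set y := kappa * INR n.
have y_def : y = (tau * INR n + INR n - INR m) / 2 by rewrite /y /kappa; field; lra.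
have y_ratio : y * INR r.+1 <= INR n * INR r.
  have := Rmult_le_compat_r (INR n * INR q) _ _ _ kappa_le.
  rewrite q_eq rR /y (_ : (INR q - 1) / INR q * (INR n * INR q) = INR n * (INR q - 1)).
    by nra.
  by field; lra.
have kappa_bounds : 0 <= kappa < 1.
  split; first by rewrite /kappa; apply: Rmult_le_pos; [lra | apply/Rlt_le/Rinv_0_lt_compat; lra].
  apply: Rle_lt_trans kappa_le _; apply: (Rmult_lt_reg_r (INR q)); first lra.
  by rewrite /Rdiv Rmult_assoc Rinv_l; lra.
have [K floor_K] : exists K : nat, INR K <= y < INR K + 1.
  by apply: nat_floor_exists; rewrite y_def; lra.
rewrite (@ball_count_const_word _ x _ _ _ K m_ge) -/r; last by rewrite -y_def.
rewrite Hq_ln_binom_approx //; last lra.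
by rewrite -/y -rR -q_eq; apply: ln_partial_binom_sum.
Qed.

Theorem mainTheorem14 :
  forall (q : nat) (tau : R), (2 <= q)%N -> 0 <= tau ->
  exists (C : R) (N : nat),
  forall (n m : nat) (alpha : 'I_q),
    (1 <= n)%N -> (N <= n)%N ->
    INR n - tau * INR n <= INR m <= INR n + tau * INR n ->
    let kappa := (tau * INR n + INR n - INR m) / (2 * INR n) in
    kappa <= (INR q - 1) / INR q ->
    Rabs (logq q (INR (ball_count_n (const_word alpha m) (tau * INR n) n))
          - INR n * Hq q kappa)
      <= C * logq q (INR n).
Proof.
move=> q tau q_ge2 _; exists (4 + (4 + ln (INR q)) / ln 2), 2%N.
move=> n m x n_ge1 n_ge2 m_bounds kappa kappa_le.
have est := ln_ball_count_const_word x q_ge2 n_ge1 m_bounds kappa_le; rewrite -/kappa in est.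
have ln2_gt0 : 0 < ln 2 by rewrite -ln_1; apply: ln_increasing; lra.
have lnq_gt0 : 0 < ln (INR q).
  by rewrite -ln_1; apply: ln_increasing; [lra | apply: (lt_INR 1); apply/ltP].
have lnn_ge : ln 2 <= ln (INR n) by apply: ln_le; [lra | apply: (le_INR 2); apply/leP].
have const_le : 4 + ln (INR q) <= (4 + ln (INR q)) / ln 2 * ln (INR n).
  rewrite /Rdiv Rmult_assoc -{1}(Rmult_1_r (4 + _)); apply: Rmult_le_compat_l; first lra.
  by apply: (Rmult_le_reg_l (ln 2)) => //; rewrite -Rmult_assoc Rinv_r; lra.
have -> : logq q (INR (ball_count_n (const_word x m) (tau * INR n) n)) - INR n * Hq q kappa
    = (ln (INR (ball_count_n (const_word x m) (tau * INR n) n))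
       - INR n * Hq q kappa * ln (INR q)) * / ln (INR q).
  by rewrite /logq; field; lra.
rewrite Rabs_mult (Rabs_pos_eq (/ ln (INR q))); last by apply/Rlt_le/Rinv_0_lt_compat.
rewrite /logq /Rdiv -Rmult_assoc; apply: Rmult_le_compat_r; first by apply/Rlt_le/Rinv_0_lt_compat.
by move: const_le; rewrite /Rdiv Rmult_plus_distr_r; lra.
Qed.
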